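(* Let $\mathfrak m_N=(\mathbb RZ_\delta+\mathbb RW_\delta)+\sum_{\gamma\in\Delta_+\cup\Delta_-}(\mathbb RZ_\gamma+\mathbb RW_\gamma)$. Then $[iA_\beta,\mathfrak m_N]\subset\mathfrak m_N$, $[Z_\beta,\mathfrak m_N]\perp\mathfrak m_N$ and $[W_\beta,\mathfrak m_N]\perp\mathfrak m_N$, where orthogonality is with respect to $\langle\,,\,\rangle$.
   Context: Let $\mathfrak g$ be a compact simple Lie algebra not isomorphic to $\mathfrak{sp}(n)$, $\mathfrak a$ a maximal abelian subalgebra, $\tau$ the conjugation of $\mathfrak g^{\mathbb C}$ w.r.t. $\mathfrak g$, $(\,,\,)$ the Killing form of $\mathfrak g^{\mathbb C}$, $\langle\,,\,\rangle=-(\,,\,)|_{\mathfrak g\times\mathfrak g}$, $\Sigma$ the root system w.r.t. $\mathfrak a^{\mathbb C}$; for $\alpha\in\Sigma$, $H_\alpha\in i\mathfrak a$ with $\alpha(H)=(H_\alpha,H)$, $(\alpha,\gamma)=(H_\alpha,H_\gamma)$, $A_\alpha=\frac2{(\alpha,\alpha)}H_\alpha$. $\Sigma^+$ positive roots, $\beta$ the highest root, $\Sigma_{\gamma,n}=\{\alpha\in\Sigma:2(\gamma,\alpha)/(\gamma,\gamma)=n\}$, $\Sigma^+_{\gamma,n}=\Sigma_{\gamma,n}\cap\Sigma^+$. Root vectors $X_\alpha$ satisfy $\tau(X_\alpha)=-X_{-\alpha}$, $[X_\alpha,X_{-\alpha}]=A_\alpha$, $[X_\alpha,X_\gamma]=\pm(q+1)X_{\alpha+\gamma}$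 if $\alpha+\gamma\in\Sigma$ ($q$ maximal with $\gamma-q\alpha\in\Sigma$), $0$ if $\alpha+\gamma\notin\Sigma\cup\{0\}$. For $\alpha\in\Sigma^+$, $Z_\alpha=X_\alpha-X_{-\alpha}$, $W_\alpha=i(X_\alpha+X_{-\alpha})$. Fix $\delta\in\Sigma_{\beta,1}$ with $(\delta,\delta)=(\beta,\beta)$, and set $\Delta_+=\{\delta-\gamma:\gamma\in\Sigma^+_{\beta,0}\cap\Sigma_{\delta,1}\}$, $\Delta_-=\{\delta+\gamma:\gamma\in\Sigma^+_{\beta,0}\cap\Sigma_{\delta,-1}\}$ (these are subsets of $\Sigma_{\beta,1}\subset\Sigma^+$). *)

(* Setting: compact simple Lie algebras, modelled through
   their complexification, a finite-dimensional vector space over C = R[i]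
   (R an arbitrary real closed field, e.g. the reals). *)
From mathcomp Require Import all_boot all_order all_algebra.
From mathcomp Require Import complex.
Set Implicit Arguments. Unset Strict Implicit. Unset Printing Implicit Defensive.
Import Order.TTheory GRing.Theory Num.Theory.
Local Open Scope ring_scope.

Definition rC (R : rcfType) (r : R) : R[i] := (r%:C)%C.

Section LieSetup.
Variables (R : rcfType) (V : vectType R[i]).
Local Notation C := R[i].

Variable br : V -> V -> V.

Definition lie_bracket : Prop :=
  [/\ (forall (c : C) x y z, br (c *: x + y) z = c *: br x z + br y z),
      (forall (c : C) x y z, br x (c *: y + z) = c *: br x y + br x z),
      (forall x, br x x = 0) &
      (forall x y z, br x (br y z) + br y (br z x) + br z (br x y) = 0)].

Definition killing (x y : V) : C :=
  \sum_(i < \dim (fullv : {vspace V}))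
     coord (vbasis fullv) i (br x (br y (tnth (vbasis fullv) i))).

Definition ip (x y : V) : C := - killing x y.

Variable tau : V -> V.

Definition conjugation : Prop :=
  [/\ (forall x y, tau (x + y) = tau x + tau y),
      (forall (c : C) x, tau (c *: x) = c^* *: tau x),
      (forall x, tau (tau x) = x) &
      (forall x y, tau (br x y) = br (tau x) (tau y))].

Definition in_g (x : V) : Prop := tau x = x.

Definition real_subspace (P : V -> Prop) : Prop :=
  [/\ P 0, (forall x y, P x -> P y -> P (x + y)) &
      (forall (r : R) x, P x -> P (rC r *: x))].

Definition compact_simple : Prop :=
  [/\ (forall x, in_g x -> x != 0 -> killing x x < 0),
      (exists x y, [/\ in_g x, in_g y & br x y != 0]) &
      (forall I : V -> Prop, real_subspace I -> (forall x, I x -> in_g x) ->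
         (forall x y, in_g x -> I y -> I (br x y)) ->
         (forall x, I x -> x = 0) \/ (forall x, in_g x -> I x))].

Definition Jmx (n : nat) : 'M[C]_(n + n) := block_mx 0 1%:M (- 1%:M) 0.
Definition in_sp (n : nat) (M : 'M[C]_(n + n)) : Prop :=
  (map_mx Num.conj M)^T = - M /\ M^T *m Jmx n + Jmx n *m M = 0.

Definition iso_to_sp (n : nat) : Prop :=
  exists phi : V -> 'M[C]_(n + n),
  [/\ (forall x y, in_g x -> in_g y -> phi (x + y) = phi x + phi y),
      (forall (r : R) x, in_g x -> phi (rC r *: x) = rC r *: phi x),
      (forall x y, in_g x -> in_g y ->
          phi (br x y) = phi x *m phi y - phi y *m phi x),
      (forall x y, in_g x -> in_g y -> phi x = phi y -> x = y) &
      (forall x, in_g x -> in_sp (phi x)) /\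
      (forall M, in_sp M -> exists2 x, in_g x & phi x = M)].

Definition abelian (P : V -> Prop) : Prop :=
  forall x y, P x -> P y -> br x y = 0.

Definition max_abelian (A : V -> Prop) : Prop :=
  [/\ real_subspace A, (forall x, A x -> in_g x), abelian A &
      (forall B : V -> Prop, real_subspace B -> (forall x, B x -> in_g x) ->
         abelian B -> (forall x, A x -> B x) -> forall x, B x -> A x)].

Variable A : V -> Prop.

Definition in_aC (h : V) : Prop := exists a b, [/\ A a, A b & h = a + 'i *: b].
Definition in_ia (h : V) : Prop := exists2 a, A a & h = 'i *: a.

(* Roots.  A root alpha is identified with H_alpha in i a, where        *)
(* alpha(H) = (H_alpha, H).                                             *)
Definition root_space (Ha X : V) : Prop :=
  forall h, in_aC h -> br h X = killing Ha h *: X.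

Definition is_root (Ha : V) : Prop :=
  [/\ in_ia Ha, Ha != 0 & exists2 X, X != 0 & root_space Ha X].

Definition coroot (Ha : V) : V := (2 / killing Ha Ha) *: Ha.

Definition in_Sigma_n (g : V) (n : int) (a : V) : Prop :=
  is_root a /\ 2 * killing g a / killing g g = n%:~R.

Definition positive_system (P : V -> Prop) : Prop :=
  exists2 H0, in_ia H0 &
    (forall a, is_root a -> killing H0 a != 0) /\
    (forall a, P a <-> is_root a /\ 0 < killing H0 a).

Definition highest_root (P : V -> Prop) (beta : V) : Prop :=
  P beta /\ forall a, is_root a ->
    exists s : seq V, (forall x, x \in s -> P x) /\ beta - a = \sum_(x <- s) x.

Definition qmax (a g : V) (q : nat) : Prop :=
  is_root (g - q%:R *: a) /\ forall q', is_root (g - q'%:R *: a) -> (q' <= q)%N.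

Definition root_vectors (X : V -> V) : Prop :=
  forall a, is_root a ->
  [/\ X a != 0, root_space a (X a), tau (X a) = - X (- a),
      br (X a) (X (- a)) = coroot a &
      forall g, is_root g ->
        (is_root (a + g) -> forall q, qmax a g q ->
            exists s : bool, br (X a) (X g) = ((-1) ^+ s * (q.+1)%:R) *: X (a + g))
        /\ (~ is_root (a + g) -> a + g != 0 -> br (X a) (X g) = 0)].

Variable X : V -> V.
Definition Zv (a : V) : V := X a - X (- a).
Definition Wv (a : V) : V := 'i *: (X a + X (- a)).

Variables (P : V -> Prop) (beta delta : V).

Definition in_Delta_plus (x : V) : Prop :=
  exists g, [/\ P g, in_Sigma_n beta 0 g, in_Sigma_n delta 1 g & x = delta - g].
Definition in_Delta_minus (x : V) : Prop :=
  exists g, [/\ P g, in_Sigma_n beta 0 g, in_Sigma_n delta (-1) g & x = delta + g].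

Definition in_mN (x : V) : Prop :=
  exists s : seq (R * R * V),
    (forall t, t \in s -> t.2 = delta \/ in_Delta_plus t.2 \/ in_Delta_minus t.2) /\
    x = \sum_(t <- s) (rC t.1.1 *: Zv t.2 + rC t.1.2 *: Wv t.2).

End LieSetup.

From HB Require Import structures.
From mathcomp Require Import all_boot all_order all_algebra.
From mathcomp Require Import complex ring zify.
From Stdlib Require Import Classical_Prop.
Set Implicit Arguments. Unset Strict Implicit. Unset Printing Implicit Defensive.
Import Order.TTheory GRing.Theory Num.Theory.
Local Open Scope ring_scope.

(* The vectors X_{±t} spanning m_N (t = δ or t ∈ Δ±) are root vectors for roots t
   with (t, β) = (β, δ) =: D > 0 and (t, δ) ∈ {D, 2D}.  That the elements of Δ+ and
   Δ- are roots at all is the root-string property: if (b, a) > 0 and b - a is not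
   a root, then ad(X_a)^n X_b would be infinitely many nonzero eigenvectors of ad a
   with distinct eigenvalues.  Hence ad(iA_β) acts on X_{±t} by ±i, mapping Z_t to
   W_t and W_t to -Z_t.  For the orthogonality, invariance of the Killing form
   makes ([X_{±β}, X_{±t}], X_{±t'}) vanish unless the weight ±β ± t ± t' vanishes;
   on β this weight is (±2 ± 1 ± 1)D, which forces the signs (ε, -ε, -ε), and then
   on δ it is ε(1 - μ - μ')D ≠ 0 with μ, μ' ∈ {1, 2}. *)

Lemma signed_weights_neq0 (b1 b2 b3 : bool) (mu mu' : int) : 0 < mu -> 0 < mu' ->
  ((-1) ^+ b1 * 2 + (-1) ^+ b2 + (-1) ^+ b3 != 0 :> int) ||
  ((-1) ^+ b1 + (-1) ^+ b2 * mu + (-1) ^+ b3 * mu' != 0).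
Proof. by case: b1; case: b2; case: b3; rewrite ?expr0 ?expr1; lia. Qed.

Section ComplexLieAlgebra.
Variables (R : rcfType) (V : vectType R[i]).
Local Notation C := R[i].
Local Notation e := (vbasis (fullv : {vspace V})).

Definition linmap (f : V -> V) (lin_f : linear f) : {linear V -> V} :=
  HB.pack f (GRing.isLinear.Build C V V *:%R f lin_f).

Lemma linmapE f (lin_f : linear f) : linmap lin_f =1 f.
Proof. by []. Qed.

Definition scalmap (f : V -> C) (lin_f : scalar f) : {linear V -> C | *%R} :=
  HB.pack f (GRing.isLinear.Build C V C *%R f lin_f).

Definition lin_closed (Q : V -> Prop) :=
  [/\ Q 0, forall x y, Q x -> Q y -> Q (x + y) & forall (c : C) x, Q x -> Q (c *: x)].

Lemma lin_closed_kernel (f : V -> C) : scalar f -> lin_closed (fun x => f x = 0).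
Proof.
move=> lin_f; have f0 : f 0 = 0 := raddf0 (scalmap lin_f).
split=> [//|x y fx fy|c x fx].
- by have := lin_f 1 x y; rewrite scale1r mul1r fx fy addr0.
- by have := lin_f c x 0; rewrite addr0 f0 fx mulr0 addr0.
Qed.

Definition ltrace (f : V -> V) : C :=
  \sum_(i < \dim {:V}) coord e i (f (tnth e i)).

Lemma eq_ltrace f g : f =1 g -> ltrace f = ltrace g.
Proof. by move=> fg; apply: eq_bigr => i _; rewrite fg. Qed.

Lemma ltraceB f g : ltrace (fun u => f u - g u) = ltrace f - ltrace g.
Proof. by rewrite /ltrace -sumrB; apply: eq_bigr => i _; rewrite linearB. Qed.

Lemma coord_comp_vbasis f g (lin_f : linear f) i :
  coord e i ((f \o g) (tnth e i)) =
  \sum_(j < \dim {:V}) coord e j (g (tnth e i)) * coord e i (f (tnth e j)).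
Proof.
rewrite /= {1}(coord_vbasis (memvf (g (tnth e i)))) -(linmapE lin_f) !linear_sum.
by apply: eq_bigr => j _; rewrite !linearZ /= !(tnth_nth 0).
Qed.

Lemma ltraceC f g : linear f -> linear g -> ltrace (f \o g) = ltrace (g \o f).
Proof.
move=> lin_f lin_g; rewrite /ltrace.
rewrite (eq_bigr _ (fun i _ => coord_comp_vbasis g lin_f i)).
rewrite (eq_bigr _ (fun i _ => coord_comp_vbasis f lin_g i)).
by rewrite exchange_big; apply: eq_bigr => i _; apply: eq_bigr => j _; rewrite mulrC.
Qed.

Section EigenSequence.
Variables (L : V -> V) (v : nat -> V) (lam : nat -> C).
Hypotheses (lin_L : linear L) (v_neq0 : forall k, v k != 0).
Hypotheses (Lv : forall k, L (v k) = lam k *: v k) (lam_inj : injective lam).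

Lemma eigen_combination_eq0 n (c : nat -> C) :
  \sum_(i < n) c i *: v i = 0 -> forall i, (i < n)%N -> c i = 0.
Proof.
elim: n c => [//|n IH] c sum0.
have shift i : L (c i *: v i) - lam n *: (c i *: v i) = (c i * (lam i - lam n)) *: v i.
  rewrite -(linmapE lin_L) linearZ /= Lv !scalerA -scalerBl.
  by congr (_ *: _); ring.
have sum0' : \sum_(i < n) (c i * (lam i - lam n)) *: v i = 0.
  have : \sum_(i < n.+1) (c i * (lam i - lam n)) *: v i = 0.
    rewrite -(eq_bigr _ (fun (i : 'I_n.+1) _ => shift i)) sumrB -scaler_sumr sum0.
    by rewrite -[X in X - _](linear_sum (linmap lin_L)) sum0 linear0 scaler0 subr0.
  by rewrite big_ord_recr /= subrr mulr0 scale0r addr0.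
have c_lt_n i : (i < n)%N -> c i = 0.
  move=> lt_in; apply/eqP; have := IH (fun j => c j * (lam j - lam n)) sum0' i lt_in.
  move/eqP; rewrite mulf_eq0 subr_eq0 => /orP[//|/eqP/lam_inj eq_in].
  by rewrite eq_in ltnn in lt_in.
move=> i; rewrite ltnS leq_eqVlt => /orP[/eqP->|]; last exact: c_lt_n.
move: sum0; rewrite big_ord_recr /= big1 ?add0r => [/eqP|j _]; last first.
  by rewrite c_lt_n ?scale0r.
by rewrite scaler_eq0 (negbTE (v_neq0 n)) orbF => /eqP.
Qed.

Lemma eigen_seq_free n : free [tuple v i | i < n.+1].
Proof.
apply/freeP => c sum0 i.
have := @eigen_combination_eq0 n.+1 (fun j => c (inord j)).
rewrite (eq_bigr (fun j => c j *: [tuple v i | i < n.+1]`_j)) => [/(_ sum0 i (ltn_ord i))|j _].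
  by rewrite inord_val.
by rewrite inord_val -tnth_nth tnth_mktuple.
Qed.

End EigenSequence.

Lemma eigenvalue_seq_not_injective (L : V -> V) (v : nat -> V) (lam : nat -> C) :
  linear L -> (forall k, v k != 0) -> (forall k, L (v k) = lam k *: v k) ->
  ~ injective lam.
Proof.
move=> lin_L v_neq0 Lv lam_inj.
have := dimvS (subvf <<[tuple v i | i < (\dim {:V}).+1]>>%VS).
by rewrite (eqP (eigen_seq_free lin_L v_neq0 Lv lam_inj _)) size_tuple ltnn.
Qed.

Section LieAlgebra.
Variable br : V -> V -> V.
Hypothesis br_lie : lie_bracket br.
Local Notation K := (killing br).

Lemma br_linear z : linear (br z).
Proof. by case: br_lie => _ brr _ _ c x y; rewrite brr. Qed.

Lemma br_linear_l z : linear (br^~ z).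
Proof. by case: br_lie => brl _ _ _ c x y; rewrite /= brl. Qed.

Lemma brDr z : {morph br z : x y / x + y}.
Proof. exact: linearD (linmap (br_linear z)). Qed.
Lemma brZr z c : {morph br z : x / c *: x}.
Proof. exact: linearZ_LR (linmap (br_linear z)) c. Qed.
Lemma brNr z : {morph br z : x / - x}.
Proof. exact: linearN (linmap (br_linear z)). Qed.
Lemma br0r z : br z 0 = 0.
Proof. exact: linear0 (linmap (br_linear z)). Qed.
Lemma brDl z : {morph br^~ z : x y / x + y}.
Proof. exact: linearD (linmap (br_linear_l z)). Qed.
Lemma brZl z c : {morph br^~ z : x / c *: x}.
Proof. exact: linearZ_LR (linmap (br_linear_l z)) c. Qed.
Lemma brNl z : {morph br^~ z : x / - x}.
Proof. exact: linearN (linmap (br_linear_l z)). Qed.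

Lemma br_sumr z I (r : seq I) (F : I -> V) :
  br z (\sum_(i <- r) F i) = \sum_(i <- r) br z (F i).
Proof. exact: (raddf_sum (linmap (br_linear z)) r predT F). Qed.

Lemma brC x y : br x y = - br y x.
Proof.
case: br_lie => _ _ brxx _; apply/eqP; rewrite -addr_eq0.
by have := brxx (x + y); rewrite brDl !brDr !brxx add0r addr0 => ->.
Qed.

Lemma br_jacobi x y z : br x (br y z) = br (br x y) z + br y (br x z).
Proof.
case: br_lie => _ _ _ jacobi; have := jacobi x y z.
rewrite (brC z (br x y)) (brC z x) brNr => /eqP.
by rewrite -addrA addr_eq0 => /eqP ->; rewrite opprD !opprK addrC.
Qed.

Lemma killingE x y : K x y = ltrace (br x \o br y).
Proof. by []. Qed.

Lemma killingC x y : K x y = K y x.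
Proof. by rewrite !killingE ltraceC //; apply: br_linear. Qed.

Lemma killing_invariant h x y : K (br h x) y + K x (br h y) = 0.
Proof.
have lin_xy : linear (br x \o br y).
  by move=> c u w; rewrite /= !(br_linear y, br_linear x).
rewrite !killingE.
have -> : ltrace (br (br h x) \o br y) =
          ltrace (br h \o (br x \o br y)) - ltrace (br x \o (br h \o br y)).
  by rewrite -ltraceB; apply: eq_ltrace => u /=; rewrite (br_jacobi h x) addrK.
have -> : ltrace (br x \o br (br h y)) =
          ltrace (br x \o (br h \o br y)) - ltrace ((br x \o br y) \o br h).
  by rewrite -ltraceB; apply: eq_ltrace => u /=; rewrite (br_jacobi h y) brDr addrK.
by rewrite (ltraceC (br_linear h) lin_xy) addrA subrK subrr.
Qed.

Lemma br_weight h u v wu wv : br h u = wu *: u -> br h v = wv *: v ->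
  br h (br u v) = (wu + wv) *: br u v.
Proof. by move=> hu hv; rewrite br_jacobi hu hv brZl brZr scalerDl. Qed.

Lemma killing_linear_l z : scalar (K^~ z).
Proof.
move=> c x y; rewrite /= !killingE /ltrace mulr_sumr -big_split.
by apply: eq_bigr => i _ /=; rewrite brDl brZl linearP.
Qed.

Let killing_l z := scalmap (killing_linear_l z).

Lemma killingDl z : {morph K^~ z : x y / x + y}.
Proof. exact: linearD (killing_l z). Qed.
Lemma killingZl z c x : K (c *: x) z = c * K x z.
Proof. exact: linearZ_LR (killing_l z) c x. Qed.
Lemma killingNl z x : K (- x) z = - K x z.
Proof. exact: raddfN (killing_l z) x. Qed.
Lemma killingBl z : {morph K^~ z : x y / x - y}.
Proof. exact: raddfB (killing_l z). Qed.
Lemma killing0l z : K 0 z = 0.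
Proof. exact: raddf0 (killing_l z). Qed.

Lemma killingDr z : {morph K z : x y / x + y}.
Proof. by move=> x y; rewrite !(killingC z) killingDl. Qed.
Lemma killingZr z c x : K z (c *: x) = c * K z x.
Proof. by rewrite !(killingC z) killingZl. Qed.
Lemma killingNr z x : K z (- x) = - K z x.
Proof. by rewrite !(killingC z) killingNl. Qed.

Lemma killing_weight_orth h u v wu wv : br h u = wu *: u -> br h v = wv *: v ->
  wu + wv != 0 -> K u v = 0.
Proof.
move=> hu hv wuv_neq0; have := killing_invariant h u v.
rewrite hu hv killingZl killingZr -mulrDl => /eqP.
by rewrite mulf_eq0 (negbTE wuv_neq0) => /eqP.
Qed.

End LieAlgebra.

Section Roots.
Variables (br : V -> V -> V) (tau : V -> V) (A : V -> Prop) (X : V -> V).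
Hypotheses (br_lie : lie_bracket br) (tau_conj : conjugation br tau).
Hypothesis killing_neg : forall x, in_g tau x -> x != 0 -> killing br x x < 0.
Hypotheses (A_sub : real_subspace A) (A_g : forall x, A x -> in_g tau x).
Hypothesis X_root : root_vectors br tau A X.
Local Notation K := (killing br).
Local Notation is_root := (is_root br A).

Lemma tau0 : tau 0 = 0.
Proof. by case: tau_conj => tauD _ _ _; apply: (@addrI _ (tau 0)); rewrite -tauD !addr0. Qed.

Lemma killing_real x y : in_g tau x -> in_g tau y -> K x y \is Num.real.
Proof.
have real_diag z : in_g tau z -> K z z \is Num.real.
  move=> gz; have [->|z_neq0] := eqVneq z 0; first by rewrite killing0l.
  exact/ltr0_real/killing_neg.
move=> gx gy; have gxy : in_g tau (x + y).
  by case: tau_conj => tauD _ _ _; rewrite /in_g tauD gx gy.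
have polar : K x y *+ 2 = K (x + y) (x + y) - K x x - K y y.
  by rewrite killingDl // !killingDr // (killingC br_lie y x) mulr2n; ring.
by rewrite -(@realrMn _ _ 2) // polar !rpredB ?real_diag.
Qed.

Lemma A_opp x : A x -> A (- x).
Proof. by case: A_sub => _ _ AZ /(AZ (-1)); rewrite /rC rmorphN1 scaleN1r. Qed.

Lemma in_ia_aC h : in_ia A h -> in_aC A h.
Proof. by case: A_sub => A0 _ _ [a Aa ->]; exists 0, a; rewrite add0r. Qed.

Lemma root_aC a : is_root a -> in_aC A a.
Proof. by case=> /in_ia_aC. Qed.

Lemma killing_root_gt0 a : is_root a -> 0 < K a a.
Proof.
case=> [[a1 Aa1 ->]] a_neq0 _.
have a1_neq0 : a1 != 0 by apply: contraNneq a_neq0 => ->; rewrite scaler0.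
rewrite killingZl // killingZr // mulrA mulCii mulN1r oppr_gt0.
exact: killing_neg (A_g Aa1) a1_neq0.
Qed.

Lemma root_opp a : is_root a -> is_root (- a).
Proof.
case=> [[a1 Aa1 ->]] a_neq0 [Xa Xa_neq0 Xa_root].
case: tau_conj => tauD tauZ tauK tau_br.
split; [by exists (- a1); [apply: A_opp | rewrite scalerN] | by rewrite oppr_eq0 |].
exists (tau Xa); first by apply: contraNneq Xa_neq0 => tXa0; rewrite -[Xa]tauK tXa0 tau0.
move=> _ [a0 [b0 [Aa0 Ab0 ->]]].
have tau_h : tau (a0 + 'i *: - b0) = a0 + 'i *: b0.
  have tauNb0 : tau (- b0) = - b0.
    by rewrite -scaleN1r tauZ rmorphN1 (A_g Ab0).
  by rewrite tauD tauZ conjCi (A_g Aa0) tauNb0 scaleNr scalerN opprK.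
have h_aC : in_aC A (a0 + 'i *: - b0) by exists a0, (- b0); split => //; apply: A_opp.
rewrite -{1}tau_h -tau_br Xa_root // tauZ; congr (_ *: _).
have r0 := killing_real (A_g Aa1) (A_g Aa0).
have r1 := killing_real (A_g Aa1) (A_g Ab0).
rewrite !(killingNl, killingZl, killingDr, killingZr, killingNr) //.
rewrite !mulrN !mulrA mulCii !mulN1r opprK rmorphD rmorphM /= conjCi !conj_Creal //.
by rewrite opprD opprK mulNr.
Qed.

Lemma root_vector_weight a h : is_root a -> in_aC A h -> br h (X a) = K a h *: X a.
Proof. by move=> /X_root[_ Xa_root _ _ _]; apply: Xa_root. Qed.

Lemma root_vector_neq0 a : is_root a -> X a != 0.
Proof. by case/X_root. Qed.

Lemma root_vectors_orth p1 p2 p3 h :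
  is_root p1 -> is_root p2 -> is_root p3 -> in_aC A h ->
  K p1 h + K p2 h + K p3 h != 0 -> K (br (X p1) (X p2)) (X p3) = 0.
Proof.
move=> r1 r2 r3 h_aC; apply: (killing_weight_orth br_lie (h := h)).
- by apply: br_weight; rewrite // root_vector_weight.
- exact: root_vector_weight.
Qed.

Lemma root_sub a b : is_root a -> is_root b -> b - a != 0 -> 0 < K b a ->
  is_root (b - a).
Proof.
move=> ra rb ba_neq0 m_gt0; apply: NNPP => not_root.
have [_ _ _ e_f _] := X_root ra.
have f_Xb : br (X (- a)) (X b) = 0.
  have [_ _ _ _ string] := X_root (root_opp ra).
  by apply: (string b rb).2; rewrite addrC.
set e := X a; set f := X (- a); set m := K b a; set k := K a a.
have k_gt0 : 0 < k := killing_root_gt0 ra.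
have c_gt0 : 0 < 2 / k by rewrite divr_gt0.
pose v n := iter n (br e) (X b).
have a_aC := root_aC ra.
have Xb_weight : br a (X b) = m *: X b by rewrite root_vector_weight.
have v_weight n : br a (v n) = (m + n%:R * k) *: v n.
  elim: n => [|n IH]; first by rewrite mul0r addr0; apply: Xb_weight.
  rewrite /= br_jacobi // root_vector_weight // IH brZl // brZr //.
  by rewrite -scalerDl -addn1 natrD -/k; congr (_ *: _); ring.
have f_v n : br f (v n.+1) = - (2 / k * (m + n%:R * k)) *: v n + br e (br f (v n)).
  by rewrite /= br_jacobi // (brC br_lie f e) e_f brNl // brZl // v_weight scalerA scaleNr.
have f_v_lower n : exists2 d, d < 0 & br f (v n.+1) = d *: v n.
  elim: n => [|n [d d_lt0 IH]].
    exists (- (2 / k * m)); first by rewrite oppr_lt0 mulr_gt0.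
    by rewrite f_v mul0r addr0 f_Xb br0r // addr0.
  exists (- (2 / k * (m + n.+1%:R * k)) + d).
    rewrite addrC -opprB oppr_lt0 subr_gt0 (lt_trans d_lt0) // mulr_gt0 //.
    by rewrite ltr_wpDr // mulr_ge0 // ltW.
  by rewrite f_v IH brZr // scalerDl.
have v_neq0 n : v n != 0.
  elim: n => [|n IH]; first exact: root_vector_neq0.
  apply: contraNneq IH => vn0; have [d d_lt0] := f_v_lower n.
  by rewrite vn0 br0r // => /esym/eqP; rewrite scaler_eq0 (lt_eqF d_lt0).
apply: (eigenvalue_seq_not_injective (br_linear br_lie a) v_neq0 v_weight).
move=> i j /addrI /(mulIf (lt0r_neq0 k_gt0)) /eqP.
by rewrite eqr_nat => /eqP.
Qed.

Section LevelOneSpace.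
Variables (P : V -> Prop) (beta delta : V).
Hypotheses (beta_root : is_root beta) (delta_Sigma : in_Sigma_n br A beta 1 delta).
Hypothesis delta_length : killing br delta delta = killing br beta beta.
Local Notation D := (K beta delta).

Definition mN_root t :=
  t = delta \/ in_Delta_plus br A P beta delta t \/ in_Delta_minus br A P beta delta t.

Lemma killing_beta : K beta beta = 2 * D.
Proof. by apply/esym/divr1_eq; case: delta_Sigma => _ ->. Qed.

Lemma killing_beta_delta_gt0 : 0 < D.
Proof. by have := killing_root_gt0 beta_root; rewrite killing_beta pmulr_rgt0. Qed.

Let D_neq0 : D != 0 := lt0r_neq0 killing_beta_delta_gt0.
Let delta_root : is_root delta := delta_Sigma.1.
Let killing_delta : K delta delta = 2 * D := etrans delta_length killing_beta.

Lemma Sigma_n_pairing g a n : K g g = 2 * D -> in_Sigma_n br A g n a -> K g a = n%:~R * D.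
Proof. by move=> Kgg [_ <-]; rewrite Kgg; field. Qed.

Lemma Delta_plus_pairing t : in_Delta_plus br A P beta delta t ->
  [/\ is_root t, K t beta = D & K t delta = D].
Proof.
case=> g [_ Sbg Sdg ->]; have g_root := Sbg.1.
have := Sigma_n_pairing killing_beta Sbg; rewrite mul0r => Kbg.
have := Sigma_n_pairing killing_delta Sdg; rewrite mul1r => Kdg.
split; last 2 first.
- by rewrite killingBl // (killingC br_lie g) Kbg subr0 killingC.
- by rewrite killingBl // killing_delta (killingC br_lie g) Kdg; ring.
apply: root_sub => //; last by rewrite Kdg killing_beta_delta_gt0.
apply: contra_neq D_neq0 => /subr0_eq dg.
move: Kdg; rewrite -dg killing_delta => /(congr1 (fun x => x - D)).
by rewrite subrr => <-; ring.
Qed.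

Lemma Delta_minus_pairing t : in_Delta_minus br A P beta delta t ->
  [/\ is_root t, K t beta = D & K t delta = D].
Proof.
case=> g [_ Sbg Sdg ->]; have g_root := Sbg.1.
have := Sigma_n_pairing killing_beta Sbg; rewrite mul0r => Kbg.
have := Sigma_n_pairing killing_delta Sdg; rewrite mulN1r => Kdg.
split; last 2 first.
- by rewrite killingDl // (killingC br_lie g) Kbg addr0 killingC.
- by rewrite killingDl // killing_delta (killingC br_lie g) Kdg; ring.
rewrite -[g]opprK; apply: root_sub => //.
- exact: root_opp.
- apply: contra_neq D_neq0; rewrite opprK addrC => /eqP; rewrite addr_eq0 => /eqP gd.
  move: Kdg; rewrite gd killingNr // killing_delta => /oppr_inj.
  by move=> /(congr1 (fun x => x - D)); rewrite subrr => <-; ring.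
by rewrite killingNr // Kdg opprK killing_beta_delta_gt0.
Qed.

Lemma mN_root_pairing t : mN_root t ->
  [/\ is_root t, K t beta = D & exists2 mu : int, 0 < mu & K t delta = mu%:~R * D].
Proof.
case=> [->|[/Delta_plus_pairing|/Delta_minus_pairing] [t_root Ktb Ktd]].
- by split; [|rewrite killingC|exists 2].
- by split=> //; exists 1; rewrite ?mul1r.
- by split=> //; exists 1; rewrite ?mul1r.
Qed.

Lemma signed_root (b : bool) a : is_root a -> is_root ((-1) ^+ b *: a).
Proof. by case: b; rewrite ?expr0 ?scale1r ?expr1 ?scaleN1r //; apply: root_opp. Qed.

Lemma killing_signed (b : bool) a h :
  K ((-1) ^+ b *: a) h = ((-1) ^+ b : int)%:~R * K a h.
Proof. by rewrite killingZl // rmorphXn rmorphN1. Qed.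

Lemma mN_root_vectors_orth (b1 b2 b3 : bool) t t' : mN_root t -> mN_root t' ->
  K (br (X ((-1) ^+ b1 *: beta)) (X ((-1) ^+ b2 *: t))) (X ((-1) ^+ b3 *: t')) = 0.
Proof.
move=> /mN_root_pairing[t_root Ktb [mu mu_gt0 Ktd]].
move=> /mN_root_pairing[t'_root Kt'b [mu' mu'_gt0 Kt'd]].
have r1 := signed_root b1 beta_root.
have r2 := signed_root b2 t_root; have r3 := signed_root b3 t'_root.
case/orP: (signed_weights_neq0 b1 b2 b3 mu_gt0 mu'_gt0) => weights_neq0.
- apply: (root_vectors_orth r1 r2 r3 (root_aC beta_root)).
  rewrite !killing_signed killing_beta Ktb Kt'b.
  have -> : forall s1 s2 s3 : int, s1%:~R * (2 * D) + s2%:~R * D + s3%:~R * D =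
      (s1 * 2 + s2 + s3)%:~R * D by move=> s1 s2 s3; rewrite !intrD !intrM; ring.
  by rewrite mulf_neq0 // intr_eq0.
- apply: (root_vectors_orth r1 r2 r3 (root_aC delta_root)).
  rewrite !killing_signed Ktd Kt'd.
  have -> : forall s1 s2 s3 : int,
      s1%:~R * D + s2%:~R * (mu%:~R * D) + s3%:~R * (mu'%:~R * D) =
      (s1 + s2 * mu + s3 * mu')%:~R * D by move=> s1 s2 s3; rewrite !intrD !intrM; ring.
  by rewrite mulf_neq0 // intr_eq0.
Qed.

Lemma in_mN_ind (Q : V -> Prop) : lin_closed Q ->
  (forall (b : bool) t, mN_root t -> Q (X ((-1) ^+ b *: t))) ->
  forall x, in_mN br A X P beta delta x -> Q x.
Proof.
case=> Q0 QD QZ QX _ [s [s_mN ->]].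
elim: s s_mN => [|[[r1 r2] t] s IH] s_mN; first by rewrite big_nil.
rewrite big_cons; apply: (QD); last by apply: IH => u us; apply: s_mN; rewrite inE us orbT.
have t_mN : mN_root t by apply: (s_mN (r1, r2, t)); rewrite inE eqxx.
have Xt := QX false t t_mN; have Xnt := QX true t t_mN.
rewrite expr0 scale1r in Xt; rewrite expr1 scaleN1r in Xnt.
apply: (QD); apply: (QZ); rewrite /Zv /Wv.
- by rewrite -scaleN1r; apply: (QD) => //; apply: (QZ).
- by apply: (QZ); apply: (QD).
Qed.

Lemma ip_br_mN_eq0 u :
  (forall (b2 b3 : bool) t t', mN_root t -> mN_root t' ->
     K (br u (X ((-1) ^+ b2 *: t))) (X ((-1) ^+ b3 *: t')) = 0) ->
  forall x y, in_mN br A X P beta delta x -> in_mN br A X P beta delta y ->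
  ip br (br u x) y = 0.
Proof.
move=> u_orth x y x_mN y_mN; apply/eqP; rewrite oppr_eq0; apply/eqP.
move: y y_mN; apply: in_mN_ind.
  by apply: lin_closed_kernel => c y z; rewrite killingDr // killingZr.
move=> b3 t' t'_mN; move: x x_mN; apply: (in_mN_ind (Q := fun x => K (br u x) _ = 0)).
  by apply: lin_closed_kernel => c x z; rewrite brDr // brZr // killingDl // killingZl.
by move=> b2 t t_mN; apply: u_orth.
Qed.

Let iA_beta := 'i *: coroot br beta.

Lemma iA_beta_in_aC : in_aC A iA_beta.
Proof.
case: beta_root => [[b1 Ab1 beta_b1]] _ _.
have [r Er] : exists r : R, - (2 / K beta beta) = (r%:C)%C.
  apply/complex_realP; rewrite rpredN rpredM ?rpredV ?realn //.
  exact/gtr0_real/killing_root_gt0.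
exists (rC r *: b1), 0; split; first by case: A_sub => _ _; apply.
  by case: A_sub.
rewrite scaler0 addr0 /rC -Er /iA_beta /coroot; set c := 2 / _.
by rewrite beta_b1 !scalerA mulrAC mulCii mulN1r.
Qed.

Lemma killing_iA_beta t : mN_root t -> K t iA_beta = 'i.
Proof.
case/mN_root_pairing=> _ Ktb _.
by rewrite /iA_beta /coroot !killingZr // Ktb killing_beta; field.
Qed.

Lemma iA_beta_root_vector (b : bool) t : mN_root t ->
  br iA_beta (X ((-1) ^+ b *: t)) = ((-1) ^+ b * 'i) *: X ((-1) ^+ b *: t).
Proof.
move=> t_mN; have [t_root _ _] := mN_root_pairing t_mN.
rewrite root_vector_weight ?killingZl ?killing_iA_beta //.
- exact: signed_root.
- exact: iA_beta_in_aC.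
Qed.

Lemma iA_beta_Zv t : mN_root t -> br iA_beta (Zv X t) = Wv X t.
Proof.
move=> t_mN; have := iA_beta_root_vector false t_mN.
have := iA_beta_root_vector true t_mN.
rewrite expr0 scale1r mul1r expr1 scaleN1r mulN1r => Xnt Xt.
by rewrite /Zv brDr // brNr // Xt Xnt scaleNr opprK -scalerDr.
Qed.

Lemma iA_beta_Wv t : mN_root t -> br iA_beta (Wv X t) = - Zv X t.
Proof.
move=> t_mN; have := iA_beta_root_vector false t_mN.
have := iA_beta_root_vector true t_mN.
rewrite expr0 scale1r mul1r expr1 scaleN1r mulN1r => Xnt Xt.
by rewrite /Wv /Zv brZr // brDr // Xt Xnt scaleNr -scalerBr scalerA mulCii scaleN1r.
Qed.

Lemma mN_br_iA_beta x : in_mN br A X P beta delta x ->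
  in_mN br A X P beta delta (br iA_beta x).
Proof.
case=> s [s_mN ->]; exists [seq ((- t.1.2, t.1.1), t.2) | t <- s]; split.
  by move=> _ /mapP[u us ->]; exact: s_mN us.
rewrite big_map (br_sumr br_lie); apply: eq_big_seq => u us /=.
have u_mN : mN_root u.2 := s_mN u us.
rewrite (brDr br_lie) (brZr br_lie _ (rC u.1.1)) (brZr br_lie _ (rC u.1.2)).
rewrite iA_beta_Zv // iA_beta_Wv //.
by rewrite /rC rmorphN scaleNr scalerN addrC.
Qed.

Lemma mN_br_beta_span_orth c1 c2 x y :
  in_mN br A X P beta delta x -> in_mN br A X P beta delta y ->
  ip br (br (c1 *: X beta + c2 *: X (- beta)) x) y = 0.
Proof.
move=> x_mN y_mN; apply: ip_br_mN_eq0 => // b2 b3 t t' t_mN t'_mN.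
have orth b1 := mN_root_vectors_orth b1 b2 b3 t_mN t'_mN.
rewrite (brDl br_lie) !(brZl br_lie) (killingDl br_lie) !(killingZl br_lie).
have := orth false; have := orth true; rewrite expr0 scale1r expr1 scaleN1r => -> ->.
by rewrite !mulr0 addr0.
Qed.

End LevelOneSpace.
End Roots.
End ComplexLieAlgebra.

Theorem lemma3p5 (R : rcfType) (V : vectType R[i]) (br : V -> V -> V)
  (tau : V -> V) (A : V -> Prop) (P : V -> Prop) (X : V -> V) (beta delta : V) :
  lie_bracket br -> conjugation br tau -> compact_simple br tau ->
  (forall n : nat, ~ iso_to_sp br tau n) ->
  max_abelian br tau A ->
  positive_system br A P ->
  highest_root br A P beta ->
  root_vectors br tau A X ->
  in_Sigma_n br A beta 1 delta ->
  killing br delta delta = killing br beta beta ->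
  [/\ (forall x, in_mN br A X P beta delta x ->
         in_mN br A X P beta delta (br ('i *: coroot br beta) x)),
      (forall x y, in_mN br A X P beta delta x -> in_mN br A X P beta delta y ->
         ip br (br (Zv X beta) x) y = 0) &
      (forall x y, in_mN br A X P beta delta x -> in_mN br A X P beta delta y ->
         ip br (br (Wv X beta) x) y = 0)].
Proof.
move=> br_lie tau_conj [killing_neg _ _] _ [A_sub A_g _ _] [H0 _ [_ P_roots]] [P_beta _].
move=> X_root delta_Sigma delta_length.
have [beta_root _] := (P_roots beta).1 P_beta.
have span_orth := mN_br_beta_span_orth br_lie tau_conj killing_neg A_sub A_g X_root
  beta_root delta_Sigma delta_length.
split.
- exact: (mN_br_iA_beta br_lie tau_conj killing_neg A_sub A_g X_root
    beta_root delta_Sigma delta_length).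
- by rewrite /Zv -[X beta]scale1r -scaleN1r; apply: span_orth.
- by rewrite /Wv scalerDr; apply: span_orth.
Qed.
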